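(* Let $G$ be a connected threshold graph of order $n\ge 4$ and size $m$ with $n-1<m<\binom{n}{2}$, let $c$ be its number of type 1 vertices, $(b_1,\ldots,b_z)$ its backwards zero position sequence and $F_1=\sum_{i=1}^z b_i^2$. Let $\xi\in\mathbb{R}$ be the greatest real root of $P(x)=x^3-(c+1)x^2+cx-F_1$. Then $\xi$ is a simple root of $P$ and $|\xi|>|\eta|$ for every other (complex) root $\eta$ of $P$.
   Context: A threshold graph is a simple graph whose vertices can be ordered $v_1,\ldots,v_n$ so that for each $2\le i\le n$, $v_i$ is either adjacent to all of $v_1,\ldots,v_{i-1}$ (then $a_i=1$) or to none of them (then $a_i=0$); by convention $a_1=1$. Vertex $v_i$ is of type 1 if $a_i=1$ and of type 0 if $a_i=0$; $c$ and $z$ are the numbers of type 1 and type 0 vertices (here $c \ge 3$, $z\ge 1$). The backwards zero position sequence $(b_1,\ldots,b_z)$ is defined by letting $b_i$ be the number of type 1 vertices appearing after the $i$-th type 0 vertex in the order $v_1,\ldots,v_n$. *)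

From HB Require Import structures.
From mathcomp Require Import all_boot all_order all_algebra.
From mathcomp Require Import complex.
Set Implicit Arguments. Unset Strict Implicit. Unset Printing Implicit Defensive.
Import Order.TTheory GRing.Theory Num.Theory.

(* A threshold graph is encoded by its creation sequence a = [a_1; ...; a_n]
   (as a seq bool, a_1 = true by convention).  Vertex v_(i+1) is the ordinal
   i : 'I_(size a) (0-based). *)

Definition thr_adj (a : seq bool) : rel 'I_(size a) :=
  fun i j => ((i < j) && nth false a j) || ((j < i) && nth false a i).

Arguments thr_adj : clear implicits.

Definition creation_seq (a : seq bool) : Prop := nth false a 0 = true.

Definition thr_order (a : seq bool) : nat := size a.

Definition thr_size (a : seq bool) : nat :=
  #|[set p : 'I_(size a) * 'I_(size a) | (p.1 < p.2) && thr_adj a p.1 p.2]|.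

Definition thr_connected (a : seq bool) : Prop :=
  forall x y : 'I_(size a), connect (thr_adj a) x y.

Definition thr_c (a : seq bool) : nat := count id a.

(* backwards zero position sequence: the type-0 vertex at (0-based) position j
   contributes b = number of type 1 vertices after it, i.e. count id (drop j.+1 a). *)
Definition thr_F1 (a : seq bool) : nat :=
  \sum_(j < size a | ~~ nth false a j) (count id (drop j.+1 a)) ^ 2.

Local Open Scope ring_scope.

Definition thr_poly (R : rcfType) (a : seq bool) : {poly R} :=
  'X^3 - ((thr_c a).+1)%:R *: 'X^2 + (thr_c a)%:R *: 'X - ((thr_F1 a)%:R)%:P.

From mathcomp Require Import all_boot all_order all_algebra.
From mathcomp Require Import complex.
From mathcomp Require Import zify ring lra.
Set Implicit Arguments. Unset Strict Implicit. Unset Printing Implicit Defensive.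
Import Order.TTheory GRing.Theory Num.Theory.

(* Writing F for F_1, the polynomial is P(x) = x (x - 1) (x - c) - F.  In a
   connected graph the last vertex has type 1, and a non-complete graph has a
   type 0 vertex, which is therefore followed by a type 1 vertex: F > 0.  Hence
   P < 0 on x <= 0 and at max(1, c), so all real roots are positive and the
   greatest one, xi, exceeds 1 and c.  Dividing out X - xi leaves
   X^2 + (xi - c - 1) X + (xi - 1) (xi - c): its value at xi is P'(xi) > 0, so
   xi is simple, and its non-real roots have squared modulus
   (xi - 1) (xi - c) < xi^2. *)

Lemma card_ltn_pairs n : #|[set p : 'I_n * 'I_n | p.1 < p.2]| = 'C(n, 2).
Proof.
rewrite -sum1_card (eq_bigl (fun p : 'I_n * 'I_n => p.1 < p.2)) => [|p]; last by rewrite inE.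
rewrite big_mkcond -(pair_big xpredT xpredT (fun i j : 'I_n => if i < j then 1 else 0)) /=.
rewrite exchange_big /= -bin2_sum big_mkord; apply: eq_bigr => j _.
by rewrite -big_mkcond (big_ord_narrow (ltnW (ltn_ord j))) sum1_card card_ord.
Qed.

Lemma thr_size_all1 (a : seq bool) : all id a -> thr_size a = 'C(size a, 2).
Proof.
move=> /(all_nthP false) a1; rewrite /thr_size -card_ltn_pairs; apply: eq_card => p.
by rewrite !inE /thr_adj; case: ltnP => //= _; rewrite a1.
Qed.

Lemma thr_connected_last (a : seq bool) :
  thr_connected a -> 1 < size a -> last false a.
Proof.
move=> conn a_gt1; apply/negPn/negP => last0.
have lst : (size a).-1 < size a by lia.
have fst : 0 < size a by lia.
have isolated y : thr_adj a (Ordinal lst) y = false.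
  rewrite /thr_adj /= nth_last (negbTE last0) andbF /=.
  by rewrite orbF ltnNge -ltnS prednK ?ltn_ord.
have /connectP[[|y s] /= path_s eq0] := conn (Ordinal lst) (Ordinal fst).
  by move/(congr1 val): eq0 => /=; lia.
by rewrite isolated in path_s.
Qed.

Lemma thr_F1_gt0 (a : seq bool) : last false a -> ~~ all id a -> 0 < thr_F1 a.
Proof.
rewrite -has_predC => last1 /(has_nthP false)[j j_lt a_j].
have : has id (drop j.+1 a).
  move: last1; rewrite -[in last _ a](cat_take_drop j.+1 a) last_cat.
  rewrite (take_nth false j_lt) last_rcons.
  case: (drop j.+1 a) => [|y s]; first by rewrite /= (negbTE a_j).
  by move=> ly; apply/hasP; exists (last y s); rewrite ?mem_last.
by rewrite has_count /thr_F1 (bigD1 (Ordinal j_lt)) //= addn_gt0 expn_gt0 => ->.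
Qed.

Local Open Scope ring_scope.

Lemma quadratic_nonreal_root_norm (R : rcfType) (p q a b : R) : b != 0 ->
  root (map_poly (real_complex R) ('X^2 + p *: 'X + q%:P)) (a +i* b)%C ->
  a ^+ 2 + b ^+ 2 = q.
Proof.
move=> b_ne0; rewrite /root !rmorphD /= map_polyXn map_polyZ map_polyX map_polyC.
rewrite !hornerE /= expr2 -!complexr0; simpc; rewrite eq_complex /= => /andP[/eqP re /eqP im].
have twice_a : 2 * a + p = 0 by apply: (mulIf b_ne0); lra.
nra.
Qed.

Section Cubic.
Variables (R : rcfType) (c F : R).

Definition cubic : {poly R} := 'X^3 - (c + 1) *: 'X^2 + c *: 'X - F%:P.

Definition cubic_cofactor (xi : R) : {poly R} :=
  'X^2 + (xi - c - 1) *: 'X + ((xi - 1) * (xi - c))%:P.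

Lemma horner_cubic x : cubic.[x] = x * (x - 1) * (x - c) - F.
Proof. by rewrite /cubic !(hornerD, hornerN, hornerZ, hornerXn, hornerC, hornerX); ring. Qed.

Lemma horner_cubic_cofactor xi x :
  (cubic_cofactor xi).[x] = x ^+ 2 + (xi - c - 1) * x + (xi - 1) * (xi - c).
Proof. by rewrite !hornerE. Qed.

Lemma cubic_factor xi : root cubic xi -> cubic = ('X - xi%:P) * cubic_cofactor xi.
Proof.
move/rootP; rewrite horner_cubic => root_xi; rewrite /cubic /cubic_cofactor.
have -> : F = xi * (xi - 1) * (xi - c) by lra.
rewrite -!mul_polyC !(rmorphD, rmorphB, rmorphM, rmorph1) /=.
ring.
Qed.

Lemma cubic_root_gt0 x : 0 <= c -> 0 < F -> root cubic x -> 0 < x.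
Proof.
move=> c_ge0 F_gt0 /rootP; rewrite horner_cubic => root_x.
rewrite ltNge; apply/negP => x_le0.
have : 0 <= x * (x - 1) * (c - x) by apply: mulr_ge0; [apply: mulr_le0 | ]; lra.
nra.
Qed.

Lemma cubic_root_ub_gt xi : 0 <= c -> 0 < F ->
  (forall x, root cubic x -> x <= xi) -> 1 < xi /\ c < xi.
Proof.
move=> c_ge0 F_gt0 xi_max.
have [m [m_ge1 m_gec m_le m_neg]] :
    exists m, [/\ 1 <= m, c <= m, m <= c + 1 & cubic.[m] < 0].
  by case: (lerP 1 c) => c1; [exists c | exists 1]; rewrite horner_cubic; split; lra.
set M := c + F + 1.
have M_nneg : 0 <= cubic.[M].
  rewrite horner_cubic /M; have : F <= (c + F + 1) * (c + F) * (F + 1) by nra.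
  lra.
have m_le_M : m <= M by rewrite /M; lra.
have /(poly_ivt m_le_M)[x /andP[m_le_x _] root_x] : cubic.[m] <= 0 <= cubic.[M].
  by rewrite (ltW m_neg).
have m_lt_x : m < x.
  by rewrite lt_neqAle m_le_x andbT; apply: contraTneq root_x => <-; rewrite /root lt_eqF.
have := xi_max x root_x; lra.
Qed.

Lemma cubic_greatest_root_simple xi : 0 <= c -> 0 < F ->
  root cubic xi -> (forall x, root cubic x -> x <= xi) ->
  ~~ (('X - xi%:P) ^+ 2 %| cubic).
Proof.
move=> c_ge0 F_gt0 root_xi xi_max.
have [xi_gt1 xi_gtc] := cubic_root_ub_gt c_ge0 F_gt0 xi_max.
rewrite (cubic_factor root_xi) expr2 dvdp_mul2l ?polyXsubC_eq0 //.
rewrite dvdp_XsubCl /root horner_cubic_cofactor.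
(* the cofactor at xi is cubic^`().[xi] *)
have : 0 < xi * (xi - 1) + xi * (xi - c) + (xi - 1) * (xi - c) by nra.
by move=> pos; apply/eqP => cofactor_xi; nra.
Qed.

Lemma cubic_greatest_root_dominant xi : 0 <= c -> 0 < F ->
  root cubic xi -> (forall x, root cubic x -> x <= xi) ->
  forall eta : R[i], root (map_poly (real_complex R) cubic) eta ->
    eta != real_complex R xi -> `|eta| < `|real_complex R xi|.
Proof.
move=> c_ge0 F_gt0 root_xi xi_max [a b] root_eta eta_ne.
have [xi_gt1 xi_gtc] := cubic_root_ub_gt c_ge0 F_gt0 xi_max.
rewrite !normc_def /= ltcR ltr_sqrt; last by nra.
have [b0|b_ne0] := eqVneq b 0.
  subst b; have root_a : root cubic a by rewrite -(fmorph_root (real_complex R)).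
  have a_ne : a != xi by apply: contraNneq eta_ne => ->.
  have := cubic_root_gt0 c_ge0 F_gt0 root_a; have := xi_max a root_a.
  rewrite le_eqVlt (negbTE a_ne) /=; nra.
move: root_eta; rewrite (cubic_factor root_xi) rmorphM rootM /= map_polyXsubC root_XsubC.
rewrite (negbTE eta_ne) /= => /(quadratic_nonreal_root_norm b_ne0) ->.
nra.
Qed.

End Cubic.

Lemma thr_polyE (R : rcfType) (a : seq bool) :
  thr_poly R a = cubic (thr_c a)%:R (thr_F1 a)%:R.
Proof. by rewrite /thr_poly /cubic natr1. Qed.

Theorem lemma4p3 (R : rcfType) (a : seq bool) (xi : R) :
  creation_seq a ->
  thr_connected a ->
  (4 <= thr_order a)%N ->
  (thr_order a - 1 < thr_size a)%N ->
  (thr_size a < 'C(thr_order a, 2))%N ->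
  root (thr_poly R a) xi ->
  (forall x : R, root (thr_poly R a) x -> x <= xi) ->
  ~~ (('X - xi%:P) ^+ 2 %| thr_poly R a) /\
  (forall eta : R[i], root (map_poly (real_complex R) (thr_poly R a)) eta ->
     eta != real_complex R xi -> `|eta| < `|real_complex R xi|).
Proof.
rewrite /thr_order => _ conn n_ge4 _ not_complete root_xi xi_max.
have F1_gt0 : (0 < thr_F1 a)%N.
  apply: thr_F1_gt0; first by apply: thr_connected_last => //; lia.
  by move: not_complete; apply: contraTN => /thr_size_all1 ->; rewrite ltnn.
have c_ge0 : 0 <= (thr_c a)%:R :> R := ler0n _ _.
have F_gt0 : 0 < (thr_F1 a)%:R :> R by rewrite ltr0n.
rewrite thr_polyE in root_xi xi_max *.
split; [exact: cubic_greatest_root_simple | exact: cubic_greatest_root_dominant].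
Qed.
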